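(* Let $q\in\mathbb C$ with $|q|=1$, $q^2\neq1$, and let $A,B$ be self-adjoint operators on a Hilbert space $\mathcal H$. Fix $a,b\in\mathbb R$ with $ab\neq0$, and choose a square root $q^{1/2}$ of $q$, setting $\bar q^{1/2}:=\overline{q^{1/2}}$. Define the operator $T$ with domain $\mathcal D(T):=\mathcal D_q(A,B)$ by $$Tf=\bar q^{1/2}(A-aq^{1/2}I)(B-bq^{1/2}I)f+\tfrac{\bar q^{1/2}-q^{1/2}}{2}\,ab\,f .$$ If $T$ is essentially self-adjoint, then with $\lambda=a\bar q^{1/2}$ and $\mu=b\bar q^{1/2}$ (so that $\lambda,\lambda q\in\rho(A)$, $\mu,\mu q\in\rho(B)$) both identities $$R_\lambda(A)R_\mu(B)=qR_{\mu q}(B)R_{\lambda q}(A)+\mu\lambda q(q-1)R_{\mu q}(B)R_{\lambda q}(A)R_\lambda(A)R_\mu(B),$$ $$R_\lambda(A)R_\mu(B)=qR_{\mu q}(B)R_{\lambda q}(A)+\mu\lambda q(q-1)R_\lambda(A)R_\mu(B)R_{\mu q}(B)R_{\lambda q}(A)$$ hold on all of $\mathcal H$, and the bounded operator $R_{bq^{1/2}}(B)R_{aq^{1/2}}(A)$ is normal.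
   Context: $\rho(T)$ denotes the resolvent set and $R_\lambda(T)=(T-\lambda I)^{-1}$ the resolvent of a closed operator; products of unbounded operators have their natural domains; $\mathcal D_q(A,B):=\{f\in\mathcal D(BA)\cap\mathcal D(AB): ABf=qBAf\}$. (The operator $T$ is symmetric.) *)

From Stdlib Require Import Reals.
Open Scope R_scope.

Record Cx : Type := mkCx { cre : R ; cim : R }.

Definition RtoC (r : R) : Cx := mkCx r 0.
Definition Cadd (z w : Cx) : Cx := mkCx (cre z + cre w) (cim z + cim w).
Definition Copp (z : Cx) : Cx := mkCx (- cre z) (- cim z).
Definition Csub (z w : Cx) : Cx := Cadd z (Copp w).
Definition Cmul (z w : Cx) : Cx :=
  mkCx (cre z * cre w - cim z * cim w) (cre z * cim w + cim z * cre w).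
Definition Cconj (z : Cx) : Cx := mkCx (cre z) (- cim z).
Definition Cmod (z : Cx) : R := sqrt (cre z * cre z + cim z * cim z).
Definition Czero : Cx := RtoC 0.
Definition Cone : Cx := RtoC 1.

Record HilbertSpace : Type := {
  carrier :> Type;
  vzero : carrier;
  vadd : carrier -> carrier -> carrier;
  vopp : carrier -> carrier;
  vscal : Cx -> carrier -> carrier;
  inner : carrier -> carrier -> Cx;   (* linear in the first argument *)
  vaddA : forall x y z, vadd x (vadd y z) = vadd (vadd x y) z;
  vaddC : forall x y, vadd x y = vadd y x;
  vadd0 : forall x, vadd x vzero = x;
  vaddN : forall x, vadd x (vopp x) = vzero;
  vscal1 : forall x, vscal Cone x = x;
  vscalA : forall a b x, vscal a (vscal b x) = vscal (Cmul a b) x;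
  vscalDl : forall a b x, vscal (Cadd a b) x = vadd (vscal a x) (vscal b x);
  vscalDr : forall a x y, vscal a (vadd x y) = vadd (vscal a x) (vscal a y);
  inner_addl : forall x y z, inner (vadd x y) z = Cadd (inner x z) (inner y z);
  inner_scall : forall a x y, inner (vscal a x) y = Cmul a (inner x y);
  inner_conj : forall x y, inner y x = Cconj (inner x y);
  inner_pos : forall x, 0 <= cre (inner x x);
  inner_def : forall x, inner x x = Czero -> x = vzero;
  complete : forall u : nat -> carrier,
    (forall eps, 0 < eps -> exists N, forall n m, (N <= n)%nat -> (N <= m)%nat ->
        sqrt (cre (inner (vadd (u n) (vopp (u m))) (vadd (u n) (vopp (u m))))) < eps) ->
    exists l, forall eps, 0 < eps -> exists N, forall n, (N <= n)%nat ->
        sqrt (cre (inner (vadd (u n) (vopp l)) (vadd (u n) (vopp l)))) < eps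
}.

Arguments vzero {h}.
Arguments vadd {h}.
Arguments vopp {h}.
Arguments vscal {h}.
Arguments inner {h}.

Section Ops.
Context {H : HilbertSpace}.

Definition vsub (x y : H) : H := vadd x (vopp y).
Definition vnorm (x : H) : R := sqrt (cre (inner x x)).

Definition converges_to (u : nat -> H) (l : H) : Prop :=
  forall eps, 0 < eps -> exists N, forall n, (N <= n)%nat -> vnorm (vsub (u n) l) < eps.

Definition dense (S : H -> Prop) : Prop :=
  forall x eps, 0 < eps -> exists y, S y /\ vnorm (vsub x y) < eps.

(* A (possibly unbounded) operator: a domain and an action (only meaningful
   on the domain). *)
Record op : Type := mkOp { dom : H -> Prop ; app : H -> H }.

Definition graph_of (T : op) (f g : H) : Prop := dom T f /\ g = app T f.

(* Self-adjointness of an operator given by its graph G, i.e. G = G( T^* ):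
   single-valued, densely defined, symmetric, and D(T^* ) included in D(T). *)
Definition self_adjoint_graph (G : H -> H -> Prop) : Prop :=
  (forall f g1 g2, G f g1 -> G f g2 -> g1 = g2) /\
  dense (fun f => exists g, G f g) /\
  (forall f k g h, G f k -> G g h -> inner k g = inner f h) /\
  (forall g h, (forall f k, G f k -> inner k g = inner f h) -> G g h).

Definition self_adjoint (T : op) : Prop := self_adjoint_graph (graph_of T).

Definition closure_graph (T : op) (f g : H) : Prop :=
  exists u : nat -> H, (forall n, dom T (u n)) /\
    converges_to u f /\ converges_to (fun n => app T (u n)) g.

(* T is essentially self-adjoint: T is closable and its closure is self-adjoint *)
Definition ess_self_adjoint (T : op) : Prop := self_adjoint_graph (closure_graph T).

Definition bounded (R0 : H -> H) : Prop :=
  exists M, forall x, vnorm (R0 x) <= M * vnorm x.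

Definition is_resolvent (T : op) (lam : Cx) (R0 : H -> H) : Prop :=
  (forall x, dom T (R0 x) /\ vsub (app T (R0 x)) (vscal lam (R0 x)) = x) /\
  (forall f, dom T f -> R0 (vsub (app T f) (vscal lam f)) = f) /\
  bounded R0.

Definition in_resolvent_set (T : op) (lam : Cx) : Prop :=
  exists R0, is_resolvent T lam R0.

Definition is_adjoint_bdd (N Nadj : H -> H) : Prop :=
  forall x y, inner (N x) y = inner x (Nadj y).
Definition normal_bdd (N : H -> H) : Prop :=
  bounded N /\ exists Nadj, is_adjoint_bdd N Nadj /\ forall x, N (Nadj x) = Nadj (N x).

Definition Dq (q : Cx) (A B : op) (f : H) : Prop :=
  dom A f /\ dom B (app A f) /\ dom B f /\ dom A (app B f) /\
  app A (app B f) = vscal q (app B (app A f)).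

(* T f = qbar^{1/2} (A - a q^{1/2} I)(B - b q^{1/2} I) f
         + ((qbar^{1/2} - q^{1/2})/2) a b f,   D(T) = D_q(A,B),
   where s = q^{1/2} *)
Definition T_op (q s : Cx) (a b : R) (A B : op) : op :=
  mkOp (Dq q A B)
    (fun f =>
       let g := vsub (app B f) (vscal (Cmul (RtoC b) s) f) in
       vadd (vscal (Cconj s) (vsub (app A g) (vscal (Cmul (RtoC a) s) g)))
            (vscal (Cmul (Cmul (RtoC (/2)) (Csub (Cconj s) s)) (RtoC (a * b))) f)).

End Ops.
Arguments op : clear implicits.

(* Write s = q^{1/2}, lam = a s^*, mu = b s^*.  Since |s| = 1 and s is not real,
   lam q = a s, mu q = b s, and these four points are non-real, hence lie in the
   resolvent sets of the self-adjoint operators A and B.  For f in D_q(A,B) put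
   g = (B - mu)(A - lam) f and h = (A - lam q)(B - mu q) f.  Then
     R_lam(A) R_mu(B) g = f,   R_{mu q}(B) R_{lam q}(A) h = f,   h = q g + c f
   with c = mu lam q (q - 1), while s^* (T + z) f = g and s (T - z) f = h for the
   non-real number z = (s^* - s) a b / 2.  As the closure of T is self-adjoint, the
   ranges of T -+ z are dense, so both resolvent identities hold on dense sets and,
   all operators involved being bounded, on the whole space.  Subtracting them shows
   that N = R_{bs}(B) R_{as}(A) commutes with R_lam(A) R_mu(B), which is its adjoint. *)

From Pilot Require Import Defs.
From Stdlib Require Import Reals.
Open Scope R_scope.
From Stdlib Require Import Lra Lia Psatz Field.
From Stdlib Require List.
From Stdlib Require Import ClassicalEpsilon Classical.

Arguments vaddA {h}. Arguments vaddC {h}. Arguments vadd0 {h}. Arguments vaddN {h}.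
Arguments vscal1 {h}. Arguments vscalA {h}. Arguments vscalDl {h}. Arguments vscalDr {h}.
Arguments inner_addl {h}. Arguments inner_scall {h}. Arguments inner_conj {h}.
Arguments inner_pos {h}. Arguments inner_def {h}. Arguments complete {h}.

Lemma Cx_eq (z w : Cx) : cre z = cre w -> cim z = cim w -> z = w.
Proof. destruct z, w; simpl; intros -> ->; reflexivity. Qed.

Ltac ceq := apply Cx_eq; simpl; try ring.

Definition Cinv (z : Cx) : Cx :=
  mkCx (cre z / (cre z * cre z + cim z * cim z)) (- cim z / (cre z * cre z + cim z * cim z)).
Definition Cdiv (z w : Cx) : Cx := Cmul z (Cinv w).

Lemma Cnorm_pos (z : Cx) : z <> Czero -> 0 < cre z * cre z + cim z * cim z.
Proof.
  intro Hz. destruct (Req_dec (cre z) 0), (Req_dec (cim z) 0); try nra.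
  exfalso; apply Hz; apply Cx_eq; simpl; auto.
Qed.

Lemma Cfield : field_theory Czero Cone Cadd Cmul Csub Copp Cdiv Cinv (@eq Cx).
Proof.
  constructor.
  - constructor; intros; ceq.
  - intro E. apply (f_equal cre) in E. simpl in E. lra.
  - reflexivity.
  - intros p Hp. pose proof (Cnorm_pos p Hp). apply Cx_eq; simpl; field; lra.
Qed.

Add Field Cxfield : Cfield.

Lemma RtoC_mult (x y : R) : RtoC (x * y) = Cmul (RtoC x) (RtoC y).
Proof. ceq. Qed.

Lemma RtoC_half : RtoC (/ 2) = Cinv (Cadd Cone Cone).
Proof. apply Cx_eq; unfold Cinv; simpl; field. Qed.

Lemma two_nonzero : Cadd Cone Cone <> Czero.
Proof. intro E. apply (f_equal cre) in E. simpl in E. lra. Qed.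

(* Formal linear combinations of atoms [vexp], with their coefficient functions;
   two combinations denote the same vector as soon as their coefficients agree.
   This is the engine of the tactic [vring] below. *)

Inductive vexp := VAtom (n : nat) | VZero | VAdd (e1 e2 : vexp) | VOpp (e : vexp)
 | VScal (c : Cx) (e : vexp).

Fixpoint coef (e : vexp) : nat -> Cx :=
  match e with
  | VAtom n => fun i => if Nat.eqb i n then Cone else Czero
  | VZero => fun _ => Czero
  | VAdd e1 e2 => fun i => Cadd (coef e1 i) (coef e2 i)
  | VOpp e => fun i => Copp (coef e i)
  | VScal c e => fun i => Cmul c (coef e i)
  end.

Fixpoint wfb (N : nat) (e : vexp) : bool :=
  match e with
  | VAtom n => Nat.ltb n N
  | VZero => true
  | VAdd e1 e2 => andb (wfb N e1) (wfb N e2)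
  | VOpp e => wfb N e
  | VScal _ e => wfb N e
  end.

Section VectorAlgebra.
Context {H : HilbertSpace}.
Implicit Types x y z : H.

Lemma vadd0l x : vadd vzero x = x.
Proof. rewrite vaddC; apply vadd0. Qed.

Lemma vadd_cancel x y z : vadd x y = vadd x z -> y = z.
Proof.
  intro E. assert (E2 : vadd (vopp x) (vadd x y) = vadd (vopp x) (vadd x z)) by now rewrite E.
  rewrite !vaddA, (vaddC (vopp x) x), vaddN, !vadd0l in E2. exact E2.
Qed.

Lemma vscal0 x : vscal Czero x = vzero.
Proof.
  apply (vadd_cancel (vscal Czero x)). rewrite vadd0, <- vscalDl. f_equal. ceq.
Qed.

Lemma vscal_zero a : vscal a (@vzero H) = vzero.
Proof.
  apply (vadd_cancel (vscal a vzero)). rewrite vadd0, <- vscalDr, vadd0. reflexivity.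
Qed.

Lemma vopp_scal x : vopp x = vscal (Copp Cone) x.
Proof.
  apply (vadd_cancel x). rewrite vaddN. rewrite <- (vscal1 x) at 1.
  rewrite <- vscalDl, <- (vscal0 x). f_equal. ceq.
Qed.

Lemma vadd_swap4 (a b c d : H) : vadd (vadd a b) (vadd c d) = vadd (vadd a c) (vadd b d).
Proof. rewrite <- !vaddA. f_equal. rewrite !vaddA. f_equal. apply vaddC. Qed.

Lemma vadd_scal_cancel (c : Cx) x y z : c <> Czero ->
  vadd x (vscal c y) = vadd x (vscal c z) -> y = z.
Proof.
  intros Hc E. apply vadd_cancel, (f_equal (vscal (Cinv c))) in E.
  rewrite !vscalA in E. replace (Cmul (Cinv c) c) with Cone in E by (field; exact Hc).
  rewrite !vscal1 in E. exact E.
Qed.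

Fixpoint den (l : list H) (e : vexp) : H :=
  match e with
  | VAtom n => List.nth n l vzero
  | VZero => vzero
  | VAdd e1 e2 => vadd (den l e1) (den l e2)
  | VOpp e => vopp (den l e)
  | VScal c e => vscal c (den l e)
  end.

Fixpoint lin (l : list H) (f : nat -> Cx) (N : nat) : H :=
  match N with
  | O => vzero
  | S N => vadd (lin l f N) (vscal (f N) (List.nth N l vzero))
  end.

Lemma lin_ext l f g N : (forall i, (i < N)%nat -> f i = g i) -> lin l f N = lin l g N.
Proof.
  induction N; simpl; intros Hfg; [reflexivity|].
  rewrite IHN by (intros; apply Hfg; lia). rewrite Hfg by lia. reflexivity.
Qed.

Lemma lin_add l f g N : lin l (fun i => Cadd (f i) (g i)) N = vadd (lin l f N) (lin l g N).
Proof. induction N; simpl; [now rewrite vadd0|]. rewrite IHN, vscalDl. apply vadd_swap4. Qed.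

Lemma lin_scal l c f N : lin l (fun i => Cmul c (f i)) N = vscal c (lin l f N).
Proof. induction N; simpl; [now rewrite vscal_zero|]. rewrite IHN, vscalDr, vscalA. reflexivity. Qed.

Lemma lin_zero l N : lin l (fun _ => Czero) N = vzero.
Proof. induction N; simpl; [reflexivity|]. rewrite IHN, vscal0, vadd0. reflexivity. Qed.

Lemma lin_opp l f N : lin l (fun i => Copp (f i)) N = vopp (lin l f N).
Proof. rewrite vopp_scal, <- lin_scal. apply lin_ext. intros; ceq. Qed.

Lemma lin_atom l n N : (n < N)%nat ->
  lin l (fun i => if Nat.eqb i n then Cone else Czero) N = List.nth n l vzero.
Proof.
  induction N; intros Hn; [lia|]. simpl.
  destruct (Nat.eq_dec n N) as [->|Hne].
  - rewrite Nat.eqb_refl, vscal1, (lin_ext _ _ (fun _ => Czero)).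
    + rewrite lin_zero. apply vadd0l.
    + intros i Hi. destruct (Nat.eqb_spec i N); [lia|reflexivity].
  - rewrite IHN by lia. destruct (Nat.eqb_spec N n); [lia|]. rewrite vscal0, vadd0. reflexivity.
Qed.

Lemma den_lin l e N : wfb N e = true -> den l e = lin l (coef e) N.
Proof.
  induction e; simpl; intros W.
  - rewrite lin_atom; [reflexivity|]. apply Nat.ltb_lt; exact W.
  - symmetry; apply lin_zero.
  - apply andb_prop in W as [W1 W2]. rewrite lin_add, IHe1, IHe2 by assumption. reflexivity.
  - rewrite lin_opp, IHe by assumption. reflexivity.
  - rewrite lin_scal, IHe by assumption. reflexivity.
Qed.

Lemma den_eq l e1 e2 : wfb (length l) e1 = true -> wfb (length l) e2 = true ->
  (forall i, (i < length l)%nat -> coef e1 i = coef e2 i) -> den l e1 = den l e2.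
Proof.
  intros W1 W2 C. rewrite (den_lin l e1 (length l)), (den_lin l e2 (length l)) by assumption.
  apply lin_ext. exact C.
Qed.

End VectorAlgebra.

(* [vnormalize] reduces an equation between linear combinations of vectors to one
   equation between complex coefficients per atom; [vring] then closes those by
   componentwise ring normalisation, leaving what [ring] cannot prove. *)
Ltac add_atom t l := match l with context [cons t _] => l | _ => constr:(cons t l) end.
Ltac atoms t l := match t with
 | vadd ?x ?y => let l1 := atoms x l in atoms y l1
 | vsub ?x ?y => let l1 := atoms x l in atoms y l1
 | vopp ?x => atoms x l
 | vscal _ ?x => atoms x l
 | vzero => l
 | _ => add_atom t l end.
Ltac atom_index t l :=
  match l with cons t _ => constr:(O) | cons _ ?l' => let n := atom_index t l' in constr:(S n) end.
Ltac reify t l := match t with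
 | vadd ?x ?y => let a := reify x l in let b := reify y l in constr:(VAdd a b)
 | vsub ?x ?y => let a := reify x l in let b := reify y l in constr:(VAdd a (VOpp b))
 | vopp ?x => let a := reify x l in constr:(VOpp a)
 | vscal ?c ?x => let a := reify x l in constr:(VScal c a)
 | vzero => constr:(VZero)
 | _ => let n := atom_index t l in constr:(VAtom n) end.
Ltac vnormalize := match goal with |- ?x = ?y =>
  let T := type of x in
  let l0 := atoms x (@nil T) in let l := atoms y l0 in
  let e1 := reify x l in let e2 := reify y l in
  change (den l e1 = den l e2); apply den_eq; [reflexivity | reflexivity |
  let i := fresh "i" in let Hi := fresh "Hi" in
  intros i Hi; simpl in Hi; repeat (destruct i as [|i]; [ | try (exfalso; lia)]);
  cbn -[Cadd Cmul Copp Cone Czero Cconj Csub RtoC Cinv] ] end.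
Ltac vring := vnormalize; ceq.

Section InnerProduct.
Context {H : HilbertSpace}.
Implicit Types x y k d : H.

Lemma inner_addr x y z : inner x (vadd y z) = Cadd (inner x y) (inner x z).
Proof.
  rewrite (inner_conj (vadd y z) x), inner_addl, (inner_conj x y), (inner_conj x z). ceq.
Qed.

Lemma inner_scalr a x y : inner x (vscal a y) = Cmul (Cconj a) (inner x y).
Proof. rewrite (inner_conj (vscal a y) x), inner_scall, (inner_conj x y). ceq. Qed.

Lemma inner_zl y : inner (@vzero H) y = Czero.
Proof. rewrite <- (vscal0 (@vzero H)), inner_scall. ceq. Qed.

Lemma inner_zr y : inner y (@vzero H) = Czero.
Proof. rewrite <- (vscal0 (@vzero H)), inner_scalr. ceq. Qed.

Lemma inner_oppl x y : inner (vopp x) y = Copp (inner x y).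
Proof. rewrite vopp_scal, inner_scall. ceq. Qed.

Lemma inner_oppr x y : inner x (vopp y) = Copp (inner x y).
Proof. rewrite vopp_scal, inner_scalr. ceq. Qed.

Lemma inner_self_im x : cim (inner x x) = 0.
Proof. pose proof (f_equal cim (inner_conj x x)) as E. simpl in E. lra. Qed.

Lemma re_inner_sym x y : cre (inner y x) = cre (inner x y).
Proof. rewrite (inner_conj x y). reflexivity. Qed.

Lemma re_inner_scalr a x y :
  cre (inner x (vscal a y)) = cre a * cre (inner x y) + cim a * cim (inner x y).
Proof. rewrite inner_scalr. simpl. ring. Qed.

Lemma re_inner_scall a x y :
  cre (inner (vscal a x) y) = cre a * cre (inner x y) - cim a * cim (inner x y).
Proof. rewrite inner_scall. simpl. ring. Qed.

Definition nsq x : R := cre (inner x x).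

Lemma nsq_pos x : 0 <= nsq x.
Proof. apply inner_pos. Qed.

Lemma nsq_zero x : nsq x = 0 -> x = vzero.
Proof. intro E. apply inner_def. apply Cx_eq; [exact E| apply inner_self_im]. Qed.

Lemma nsq_vzero : nsq (@vzero H) = 0.
Proof. unfold nsq. rewrite inner_zl. reflexivity. Qed.

Lemma nsq_add x y : nsq (vadd x y) = nsq x + nsq y + 2 * cre (inner x y).
Proof.
  unfold nsq. rewrite inner_addl, !inner_addr. simpl. rewrite (re_inner_sym x y). ring.
Qed.

Lemma nsq_scal a x : nsq (vscal a x) = (cre a * cre a + cim a * cim a) * nsq x.
Proof. unfold nsq. rewrite inner_scall, inner_scalr. simpl. rewrite inner_self_im. ring. Qed.

Lemma nsq_opp x : nsq (vopp x) = nsq x.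
Proof. rewrite vopp_scal, nsq_scal. simpl. ring. Qed.

Lemma nsq_sub x y : nsq (vsub x y) = nsq x + nsq y - 2 * cre (inner x y).
Proof. unfold vsub. rewrite nsq_add, nsq_opp, inner_oppr. simpl. ring. Qed.

Lemma nsq_add_le x y : nsq (vadd x y) <= 2 * nsq x + 2 * nsq y.
Proof.
  pose proof (nsq_sub x y). pose proof (nsq_add x y). pose proof (nsq_pos (vsub x y)). lra.
Qed.

Lemma vnorm_pos x : 0 <= vnorm x.
Proof. apply sqrt_pos. Qed.

Lemma vnorm_sq x : vnorm x * vnorm x = nsq x.
Proof. apply sqrt_sqrt, nsq_pos. Qed.

Lemma sqrt_le_bound u v : 0 <= v -> u <= v * v -> sqrt u <= v.
Proof.
  intros Hv Hu. destruct (Rle_lt_dec 0 u).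
  - rewrite <- (sqrt_square v) by exact Hv. apply sqrt_le_1; nra.
  - rewrite sqrt_neg_0 by lra. exact Hv.
Qed.

(* A weak triangle inequality, sufficient for all limit arguments below. *)
Lemma vnorm_add_le x y : vnorm (vadd x y) <= 2 * (vnorm x + vnorm y).
Proof.
  pose proof (vnorm_pos x); pose proof (vnorm_pos y).
  unfold vnorm at 1. apply sqrt_le_bound; [lra|].
  pose proof (nsq_add_le x y). pose proof (vnorm_sq x). pose proof (vnorm_sq y).
  change (nsq (vadd x y) <= 2 * (vnorm x + vnorm y) * (2 * (vnorm x + vnorm y))). nra.
Qed.

Lemma vnorm_scal a x : vnorm (vscal a x) = Cmod a * vnorm x.
Proof.
  unfold vnorm, Cmod. fold (nsq (vscal a x)).
  rewrite nsq_scal, sqrt_mult; [reflexivity| nra |apply nsq_pos].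
Qed.

Lemma vnorm_zero x : vnorm x = 0 -> x = vzero.
Proof. intro E. apply nsq_zero. rewrite <- vnorm_sq, E. ring. Qed.

Lemma vnorm_opp x : vnorm (vopp x) = vnorm x.
Proof. unfold vnorm. fold (nsq (vopp x)) (nsq x). rewrite nsq_opp. reflexivity. Qed.

Lemma quad_zero r c : 0 <= c -> (forall t, 2 * t * r <= t * t * c) -> r = 0.
Proof.
  intros Hc Ht. destruct (Req_dec r 0) as [|Hr]; [assumption|exfalso].
  specialize (Ht (r / (c + 1))).
  assert (E : 2 * (r / (c + 1)) * r = 2 * (r * r) / (c + 1)) by (field; lra).
  assert (E2 : r / (c + 1) * (r / (c + 1)) * c = (r * r) * c / ((c + 1) * (c + 1)))
    by (field; lra).
  rewrite E, E2 in Ht. assert (0 < r * r) by nra.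
  apply Rmult_le_compat_r with (r := (c + 1) * (c + 1)) in Ht; [|nra].
  unfold Rdiv in Ht.
  replace (2 * (r * r) * / (c + 1) * ((c + 1) * (c + 1))) with (2 * (r * r) * (c + 1)) in Ht
    by (field; lra).
  replace (r * r * c * / ((c + 1) * (c + 1)) * ((c + 1) * (c + 1))) with (r * r * c) in Ht
    by (field; lra).
  nra.
Qed.

Lemma re_inner_bound k d : Rabs (cre (inner k d)) <= vnorm d * (nsq k + 1).
Proof.
  assert (Key : forall t, 2 * t * cre (inner k d) <= t * t * nsq k + nsq d).
  { intro t. pose proof (nsq_sub (vscal (RtoC t) k) d) as E.
    pose proof (nsq_pos (vsub (vscal (RtoC t) k) d)).
    rewrite nsq_scal, re_inner_scall in E. simpl in E. nra. }
  pose proof (vnorm_pos d) as Hn. pose proof (vnorm_sq d) as Hs. pose proof (nsq_pos k).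
  destruct (Req_dec (vnorm d) 0) as [E0|Hn0].
  - assert (r0 : cre (inner k d) = 0).
    { apply (quad_zero _ (nsq k)); [assumption|]. intro t. specialize (Key t).
      rewrite <- Hs, E0 in Key. lra. }
    rewrite r0, Rabs_R0. nra.
  - pose proof (Key (vnorm d)). pose proof (Key (- vnorm d)). rewrite <- Hs in *.
    apply Rabs_le. split; nra.
Qed.

Lemma im_inner_bound k d : Rabs (cim (inner k d)) <= vnorm d * (nsq k + 1).
Proof.
  pose proof (re_inner_bound k (vscal (mkCx 0 1) d)) as B.
  rewrite re_inner_scalr, vnorm_scal in B. simpl in B.
  replace (Cmod (mkCx 0 1)) with 1 in B.
  - replace (0 * cre (inner k d) + 1 * cim (inner k d)) with (cim (inner k d)) in B by ring.
    lra.
  - unfold Cmod. simpl. replace (0 * 0 + 1 * 1) with 1 by ring. symmetry; apply sqrt_1.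
Qed.

End InnerProduct.

Definition rconv (r : nat -> R) (L : R) : Prop :=
  forall eps, 0 < eps -> exists N, forall n, (N <= n)%nat -> Rabs (r n - L) < eps.

Lemma inv_pos n : 0 < / (INR n + 1).
Proof. apply Rinv_0_lt_compat. pose proof (pos_INR n); lra. Qed.

Lemma small_inv e : 0 < e -> exists N, / (INR N + 1) < e.
Proof.
  intro He. destruct (archimed_cor1 e He) as [N [HN HN0]]. exists N.
  eapply Rle_lt_trans; [|exact HN]. apply Rinv_le_contravar; [apply lt_0_INR; lia|lra].
Qed.

Lemma inv_le_N N n : (N <= n)%nat -> / (INR n + 1) <= / (INR N + 1).
Proof.
  intro Hn. apply Rinv_le_contravar; [pose proof (pos_INR N); lra|]. apply le_INR in Hn. lra.
Qed.

Lemma rconv_unique r L1 L2 : rconv r L1 -> rconv r L2 -> L1 = L2.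
Proof.
  intros C1 C2. destruct (Req_dec L1 L2) as [|Hne]; [assumption|exfalso].
  assert (Hp : 0 < Rabs (L1 - L2) / 2) by (apply Rdiv_lt_0_compat; [apply Rabs_pos_lt; lra|lra]).
  destruct (C1 _ Hp) as [N1 H1]. destruct (C2 _ Hp) as [N2 H2].
  specialize (H1 (N1 + N2)%nat ltac:(lia)). specialize (H2 (N1 + N2)%nat ltac:(lia)).
  set (w := r (N1 + N2)%nat) in *.
  assert (Rabs (L1 - L2) <= Rabs (w - L2) + Rabs (w - L1)).
  { replace (L1 - L2) with ((w - L2) - (w - L1)) by ring.
    eapply Rle_trans; [apply Rabs_triang|]. rewrite Rabs_Ropp; lra. }
  lra.
Qed.

Lemma rconv_le r L c : rconv r L -> (forall n, r n < c + / (INR n + 1)) -> L <= c.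
Proof.
  intros C B. apply Rnot_lt_le. intro Hlt.
  destruct (C ((L - c) / 2)) as [N1 H1]; [lra|].
  destruct (small_inv ((L - c) / 2)) as [N2 H2]; [lra|].
  specialize (H1 (N1 + N2)%nat ltac:(lia)). specialize (B (N1 + N2)%nat).
  pose proof (inv_le_N N2 (N1 + N2) ltac:(lia)).
  pose proof (Rle_abs (- (r (N1 + N2)%nat - L))). rewrite Rabs_Ropp in *. lra.
Qed.

Lemma rconv_scal r L c : rconv r L -> rconv (fun n => c * r n) (c * L).
Proof.
  intros C eps He. assert (0 <= Rabs c) by apply Rabs_pos.
  destruct (C (eps / (Rabs c + 1))) as [N HN]; [apply Rdiv_lt_0_compat; lra|].
  exists N. intros n Hn. specialize (HN n Hn).
  rewrite <- Rmult_minus_distr_l, Rabs_mult.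
  apply Rmult_lt_compat_l with (r := Rabs c + 1) in HN; [|lra].
  replace ((Rabs c + 1) * (eps / (Rabs c + 1))) with eps in HN by (field; lra).
  pose proof (Rabs_pos (r n - L)). nra.
Qed.

Lemma sqrt_lt_bound u e : 0 < e -> u < e * e -> sqrt u < e.
Proof.
  intros He Hu. destruct (Rle_lt_dec 0 u).
  - rewrite <- (sqrt_square e) by lra. apply sqrt_lt_1_alt; lra.
  - rewrite sqrt_neg_0 by lra. exact He.
Qed.

Section Convergence.
Context {H : HilbertSpace}.

Lemma conv_ext (u v : nat -> H) l :
  (forall n, u n = v n) -> converges_to u l -> converges_to v l.
Proof.
  intros E C eps He. destruct (C eps He) as [N HN]. exists N; intros n Hn. rewrite <- E. auto.
Qed.

Lemma conv_eqlim (u : nat -> H) l m : converges_to u l -> l = m -> converges_to u m.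
Proof. intros C ->; exact C. Qed.

Lemma conv_const (l : H) : converges_to (fun _ => l) l.
Proof.
  intros eps He. exists O. intros n _. replace (vsub l l) with (@vzero H) by vring.
  unfold vnorm. fold (nsq (@vzero H)). rewrite nsq_vzero, sqrt_0. exact He.
Qed.

Lemma conv_add (u v : nat -> H) l m : converges_to u l -> converges_to v m ->
  converges_to (fun n => vadd (u n) (v n)) (vadd l m).
Proof.
  intros Cu Cv eps He.
  destruct (Cu (eps / 4)) as [N1 H1]; [lra|]. destruct (Cv (eps / 4)) as [N2 H2]; [lra|].
  exists (N1 + N2)%nat. intros n Hn.
  replace (vsub (vadd (u n) (v n)) (vadd l m)) with (vadd (vsub (u n) l) (vsub (v n) m))
    by vring.
  eapply Rle_lt_trans; [apply vnorm_add_le|].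
  specialize (H1 n ltac:(lia)). specialize (H2 n ltac:(lia)). lra.
Qed.

Lemma conv_scal c (u : nat -> H) l : converges_to u l ->
  converges_to (fun n => vscal c (u n)) (vscal c l).
Proof.
  intros Cu eps He. assert (0 <= Cmod c) by apply sqrt_pos.
  destruct (Cu (eps / (Cmod c + 1))) as [N HN]; [apply Rdiv_lt_0_compat; lra|].
  exists N. intros n Hn.
  replace (vsub (vscal c (u n)) (vscal c l)) with (vscal c (vsub (u n) l)) by vring.
  rewrite vnorm_scal. specialize (HN n Hn). pose proof (vnorm_pos (vsub (u n) l)).
  apply Rmult_lt_compat_l with (r := Cmod c + 1) in HN; [|lra].
  replace ((Cmod c + 1) * (eps / (Cmod c + 1))) with eps in HN by (field; lra). nra.
Qed.

Lemma conv_unique (u : nat -> H) l m : converges_to u l -> converges_to u m -> l = m.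
Proof.
  intros Cl Cm. assert (Hz : vnorm (vsub l m) = 0).
  { apply Rle_antisym; [|apply vnorm_pos]. apply Rnot_lt_le. intro Hp.
    destruct (Cl (vnorm (vsub l m) / 8)) as [N1 H1]; [lra|].
    destruct (Cm (vnorm (vsub l m) / 8)) as [N2 H2]; [lra|].
    specialize (H1 (N1 + N2)%nat ltac:(lia)). specialize (H2 (N1 + N2)%nat ltac:(lia)).
    set (w := u (N1 + N2)%nat) in *.
    assert (E : vsub l m = vadd (vopp (vsub w l)) (vsub w m)) by vring.
    pose proof (vnorm_add_le (vopp (vsub w l)) (vsub w m)) as Tr.
    rewrite vnorm_opp, <- E in Tr. lra. }
  apply vnorm_zero in Hz. rewrite <- (vadd0 m), <- Hz. vring.
Qed.

Lemma conv_inner_r k (u : nat -> H) l : converges_to u l ->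
  rconv (fun n => cre (inner k (u n))) (cre (inner k l)) /\
  rconv (fun n => cim (inner k (u n))) (cim (inner k l)).
Proof.
  intro C. pose proof (nsq_pos k).
  assert (D : forall n, inner k (u n) = Cadd (inner k l) (inner k (vsub (u n) l))).
  { intro n. unfold vsub. rewrite inner_addr, inner_oppr. ceq. }
  split; intros eps He; destruct (C (eps / (nsq k + 1))) as [N HN];
    try (apply Rdiv_lt_0_compat; lra);
    exists N; intros n Hn; rewrite D; simpl; specialize (HN n Hn);
    apply Rmult_lt_compat_r with (r := nsq k + 1) in HN; try lra;
    replace (eps / (nsq k + 1) * (nsq k + 1)) with eps in HN by (field; lra).
  - replace (cre (inner k l) + cre (inner k (vsub (u n) l)) - cre (inner k l))
      with (cre (inner k (vsub (u n) l))) by ring.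
    pose proof (re_inner_bound k (vsub (u n) l)). lra.
  - replace (cim (inner k l) + cim (inner k (vsub (u n) l)) - cim (inner k l))
      with (cim (inner k (vsub (u n) l))) by ring.
    pose proof (im_inner_bound k (vsub (u n) l)). lra.
Qed.

Lemma conv_inner_eq k k' (u v : nat -> H) l m : converges_to u l -> converges_to v m ->
  (forall n, inner k (u n) = inner k' (v n)) -> inner k l = inner k' m.
Proof.
  intros Cu Cv E. destruct (conv_inner_r k u l Cu) as [R1 I1].
  destruct (conv_inner_r k' v m Cv) as [R2 I2].
  apply Cx_eq.
  - apply (rconv_unique (fun n => cre (inner k (u n)))); [exact R1|].
    intros eps He. destruct (R2 eps He) as [N HN]. exists N; intros n Hn. rewrite E. auto.
  - apply (rconv_unique (fun n => cim (inner k (u n)))); [exact I1|].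
    intros eps He. destruct (I2 eps He) as [N HN]. exists N; intros n Hn. rewrite E. auto.
Qed.

Lemma eq_by_approximation (P Q : H -> H) (u : nat -> H) x :
  converges_to (fun n => P (u n)) (P x) -> converges_to (fun n => Q (u n)) (Q x) ->
  (forall n, P (u n) = Q (u n)) -> P x = Q x.
Proof.
  intros CP CQ E. apply (conv_unique (fun n => P (u n))); [exact CP|].
  apply (conv_ext (fun n => Q (u n))); [intro n; symmetry; apply E|exact CQ].
Qed.

Lemma bounded_comp (R1 R2 : H -> H) : Defs.bounded R1 -> Defs.bounded R2 ->
  Defs.bounded (fun x => R2 (R1 x)).
Proof.
  intros [M1 H1] [M2 H2]. exists (Rmax M2 0 * Rmax M1 0). intro x.
  pose proof (Rmax_l M1 0). pose proof (Rmax_r M1 0).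
  pose proof (Rmax_l M2 0). pose proof (Rmax_r M2 0).
  pose proof (vnorm_pos x). pose proof (vnorm_pos (R1 x)).
  specialize (H1 x). specialize (H2 (R1 x)).
  assert (vnorm (R1 x) <= Rmax M1 0 * vnorm x) by nra.
  assert (vnorm (R2 (R1 x)) <= Rmax M2 0 * vnorm (R1 x)) by nra.
  nra.
Qed.

Definition cauchy (u : nat -> H) : Prop :=
  forall eps, 0 < eps -> exists N, forall n m, (N <= n)%nat -> (N <= m)%nat ->
    vnorm (vsub (u n) (u m)) < eps.

Lemma cauchy_converges (u : nat -> H) : cauchy u -> exists l, converges_to u l.
Proof. exact (complete u). Qed.

Lemma converges_cauchy (u : nat -> H) l : converges_to u l -> cauchy u.
Proof.
  intros C eps He. destruct (C (eps / 4)) as [N HN]; [lra|].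
  exists N. intros n m Hn Hm.
  replace (vsub (u n) (u m)) with (vadd (vsub (u n) l) (vopp (vsub (u m) l))) by vring.
  eapply Rle_lt_trans; [apply vnorm_add_le|]. rewrite vnorm_opp.
  pose proof (HN n Hn). pose proof (HN m Hm). lra.
Qed.

Lemma cauchy_of_rate (u : nat -> H) (K : R) : 0 <= K ->
  (forall n m, nsq (vsub (u n) (u m)) <= K * (/ (INR n + 1) + / (INR m + 1))) -> cauchy u.
Proof.
  intros HK B eps He. destruct (small_inv (eps * eps / (2 * K + 1))) as [N HN].
  { apply Rdiv_lt_0_compat; nra. }
  exists N. intros n m Hn Hm. apply sqrt_lt_bound; [exact He|].
  fold (nsq (vsub (u n) (u m))). eapply Rle_lt_trans; [apply B|].
  pose proof (inv_le_N N n Hn). pose proof (inv_le_N N m Hm).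
  pose proof (inv_pos n). pose proof (inv_pos m). pose proof (inv_pos N).
  apply Rmult_lt_compat_r with (r := 2 * K + 1) in HN; [|lra].
  replace (eps * eps / (2 * K + 1) * (2 * K + 1)) with (eps * eps) in HN by (field; lra).
  nra.
Qed.

End Convergence.

(* The projection theorem: for a closed subspace M, every x has an element y of M
   with x - y orthogonal to M.  y is the limit of a minimising sequence for the
   distance from x to M; the orthogonality follows from the first-order condition. *)
Section Projection.
Context {H : HilbertSpace}.
Variable M : H -> Prop.
Hypothesis M0 : M vzero.
Hypothesis Mlin : forall a y1 y2, M y1 -> M y2 -> M (vadd y1 (vscal a y2)).
Hypothesis Mclosed : forall (u : nat -> H) y, (forall n, M (u n)) -> converges_to u y -> M y.

Lemma minimizing_sequence (x : H) : exists (d : R) (ys : nat -> H),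
  (forall n, M (ys n)) /\ (forall y, M y -> d <= nsq (vsub x y)) /\
  (forall n, nsq (vsub x (ys n)) < d + / (INR n + 1)).
Proof.
  set (E := fun r => exists y, M y /\ r = - nsq (vsub x y)).
  destruct (completeness E) as [L [LUb LLeast]].
  { exists 0. intros r [y [_ ->]]. pose proof (nsq_pos (vsub x y)). lra. }
  { exists (- nsq (vsub x vzero)), vzero. split; auto. }
  assert (dlow : forall y, M y -> - L <= nsq (vsub x y)).
  { intros y My. assert (Ey : E (- nsq (vsub x y))) by (exists y; auto).
    apply LUb in Ey. lra. }
  assert (dapp : forall eps, 0 < eps -> exists y, M y /\ nsq (vsub x y) < - L + eps).
  { intros eps He. apply NNPP. intro Hn.
    assert (L <= L - eps); [|lra].
    apply LLeast. intros r [y [My ->]]. apply Rnot_lt_le. intro Hlt.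
    apply Hn. exists y. split; [exact My|lra]. }
  set (ys := fun n => proj1_sig (constructive_indefinite_description _ (dapp _ (inv_pos n)))).
  exists (- L), ys. split; [|split; [exact dlow|]]; intro n;
    apply (proj2_sig (constructive_indefinite_description _ (dapp _ (inv_pos n)))).
Qed.

(* By the parallelogram law, a minimising sequence is Cauchy. *)
Lemma minimizing_rate (x : H) (d : R) (ys : nat -> H) :
  (forall n, M (ys n)) -> (forall y, M y -> d <= nsq (vsub x y)) ->
  (forall n, nsq (vsub x (ys n)) < d + / (INR n + 1)) ->
  forall n m, nsq (vsub (ys n) (ys m)) <= 2 * (/ (INR n + 1) + / (INR m + 1)).
Proof.
  intros Mys dlow Bys n m.
  set (w := vscal (RtoC (/ 2)) (vadd (ys n) (ys m))).
  assert (Mw : M w).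
  { replace w with (vadd (vscal (RtoC (/ 2)) (ys n)) (vscal (RtoC (/ 2)) (ys m)))
      by (unfold w; vring).
    replace (vscal (RtoC (/ 2)) (ys n)) with (vadd vzero (vscal (RtoC (/ 2)) (ys n)))
      by vring.
    apply Mlin; auto. }
  pose proof (dlow w Mw).
  pose proof (nsq_add (vsub x (ys n)) (vsub x (ys m))) as A1.
  pose proof (nsq_sub (vsub x (ys n)) (vsub x (ys m))) as A2.
  replace (vadd (vsub x (ys n)) (vsub x (ys m))) with (vscal (RtoC 2) (vsub x w)) in A1
    by (unfold w; vring; field).
  replace (vsub (vsub x (ys n)) (vsub x (ys m))) with (vopp (vsub (ys n) (ys m))) in A2
    by vring.
  rewrite nsq_scal in A1. rewrite nsq_opp in A2. simpl in A1.
  pose proof (Bys n). pose proof (Bys m). lra.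
Qed.

Theorem projection (x : H) : exists y, M y /\ forall m, M m -> inner (vsub x y) m = Czero.
Proof.
  destruct (minimizing_sequence x) as [d [ys [Mys [dlow Bys]]]].
  destruct (cauchy_converges ys) as [y Cy].
  { apply (cauchy_of_rate ys 2); [lra|]. exact (minimizing_rate x d ys Mys dlow Bys). }
  assert (My : M y) by exact (Mclosed ys y Mys Cy).
  set (w := vsub x y).
  assert (Cw : converges_to (fun n => vsub x (ys n)) w).
  { apply (conv_ext (fun n => vadd x (vscal (Copp Cone) (ys n)))); [intro n; vring|].
    eapply conv_eqlim; [apply conv_add; [apply conv_const|apply conv_scal, Cy]|].
    unfold w; vring. }
  assert (Re0 : forall m, M m -> cre (inner w m) = 0).
  { intros m Mm. apply (quad_zero _ (nsq m) (nsq_pos m)). intro t.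
    apply (rconv_le (fun n => 2 * t * cre (inner m (vsub x (ys n))))).
    - destruct (conv_inner_r m _ _ Cw) as [Rc _]. rewrite <- re_inner_sym.
      exact (rconv_scal _ _ (2 * t) Rc).
    - intro n. pose proof (dlow _ (Mlin (RtoC t) _ _ (Mys n) Mm)) as D.
      replace (vsub x (vadd (ys n) (vscal (RtoC t) m)))
        with (vsub (vsub x (ys n)) (vscal (RtoC t) m)) in D by vring.
      rewrite nsq_sub, nsq_scal, re_inner_scalr, re_inner_sym in D. simpl in D.
      pose proof (Bys n). nra. }
  exists y. split; [exact My|]. intros m Mm. apply Cx_eq; [apply Re0, Mm|].
  assert (Mi : M (vscal (mkCx 0 1) m)).
  { replace (vscal (mkCx 0 1) m) with (vadd vzero (vscal (mkCx 0 1) m)) by vring.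
    apply Mlin; auto. }
  pose proof (Re0 _ Mi) as R1. rewrite re_inner_scalr in R1. simpl in R1. simpl. fold w. lra.
Qed.

End Projection.

(* Self-adjoint graphs G (Defs.self_adjoint_graph): G is a closed linear relation
   with ||g - z f|| >= |Im z| ||f||, and for non-real z the range of G - z is the
   whole space (a vector orthogonal to it would be an eigenvector of G for the
   non-real eigenvalue conj z). *)
Section SelfAdjointGraph.
Context {H : HilbertSpace}.
Variable G : H -> H -> Prop.
Hypothesis HG : self_adjoint_graph G.

Lemma G_sym f k g h : G f k -> G g h -> inner k g = inner f h.
Proof. destruct HG as [_ [_ [S _]]]. apply S. Qed.

Lemma G_max g h : (forall f k, G f k -> inner k g = inner f h) -> G g h.
Proof. destruct HG as [_ [_ [_ Mx]]]. apply Mx. Qed.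

Lemma G_zero : G vzero vzero.
Proof. apply G_max. intros. rewrite inner_zr, inner_zr. reflexivity. Qed.

Lemma G_lin a f1 g1 f2 g2 :
  G f1 g1 -> G f2 g2 -> G (vadd f1 (vscal a f2)) (vadd g1 (vscal a g2)).
Proof.
  intros G1 G2. apply G_max. intros f k Gk. rewrite !inner_addr, !inner_scalr.
  rewrite (G_sym _ _ _ _ Gk G1), (G_sym _ _ _ _ Gk G2). reflexivity.
Qed.

Lemma G_closed (u v : nat -> H) f g : (forall n, G (u n) (v n)) ->
  converges_to u f -> converges_to v g -> G f g.
Proof.
  intros Gn Cu Cv. apply G_max. intros f' k Gk.
  apply (conv_inner_eq k f' u v); auto. intro n. apply (G_sym _ _ _ _ Gk (Gn n)).
Qed.

(* Since <g, f> is real, ||g - z f||^2 = ||g - Re z f||^2 + (Im z)^2 ||f||^2. *)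
Lemma G_lower (z : Cx) f g : G f g -> cim z * cim z * nsq f <= nsq (vsub g (vscal z f)).
Proof.
  intro Gf. pose proof (G_sym _ _ _ _ Gf Gf) as S.
  assert (Im0 : cim (inner g f) = 0).
  { pose proof (f_equal cim (inner_conj g f)) as E. rewrite <- S in E. simpl in E. lra. }
  rewrite nsq_sub, nsq_scal, re_inner_scalr, Im0.
  pose proof (nsq_pos (vsub g (vscal (RtoC (cre z)) f))) as P.
  rewrite nsq_sub, nsq_scal, re_inner_scalr in P. simpl in P. nra.
Qed.

Lemma G_lower_norm (z : Cx) f g : G f g -> Rabs (cim z) * vnorm f <= vnorm (vsub g (vscal z f)).
Proof.
  intro Gf. pose proof (G_lower z f g Gf) as L.
  pose proof (vnorm_pos f). pose proof (vnorm_pos (vsub g (vscal z f))).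
  pose proof (Rabs_pos (cim z)).
  rewrite <- !vnorm_sq in L.
  assert (E : Rabs (cim z) * Rabs (cim z) = cim z * cim z)
    by (rewrite <- Rabs_mult; apply Rabs_pos_eq; nra).
  nra.
Qed.

Section NonReal.
Variable z : Cx.
Hypothesis Hz : cim z <> 0.

Definition G_range (y : H) : Prop := exists f g, G f g /\ y = vsub g (vscal z f).

Lemma G_range_lin a y1 y2 : G_range y1 -> G_range y2 -> G_range (vadd y1 (vscal a y2)).
Proof.
  intros [f1 [g1 [G1 ->]]] [f2 [g2 [G2 ->]]].
  exists (vadd f1 (vscal a f2)), (vadd g1 (vscal a g2)). split; [apply G_lin; auto|vring].
Qed.

(* The range is closed: preimages of a convergent sequence form a Cauchy sequence
   by the lower bound, and G is closed. *)
Lemma G_range_closed (u : nat -> H) y : (forall n, G_range (u n)) -> converges_to u y ->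
  G_range y.
Proof.
  intros Ru Cu.
  set (p := fun n => proj1_sig (constructive_indefinite_description _ (Ru n))).
  assert (Hp : forall n, exists g, G (p n) g /\ u n = vsub g (vscal z (p n)))
    by (intro n; exact (proj2_sig (constructive_indefinite_description _ (Ru n)))).
  set (q := fun n => proj1_sig (constructive_indefinite_description _ (Hp n))).
  assert (Hq : forall n, G (p n) (q n) /\ u n = vsub (q n) (vscal z (p n)))
    by (intro n; exact (proj2_sig (constructive_indefinite_description _ (Hp n)))).
  assert (Pa : 0 < Rabs (cim z)) by (apply Rabs_pos_lt; exact Hz).
  destruct (cauchy_converges p) as [f Cp].
  { intros eps He. destruct (converges_cauchy u y Cu (eps * Rabs (cim z))) as [N HN]; [nra|].
    exists N. intros n m Hn Hm. specialize (HN n m Hn Hm).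
    assert (Gd : G (vsub (p n) (p m)) (vsub (q n) (q m))).
    { unfold vsub. rewrite !vopp_scal. apply G_lin; apply Hq. }
    pose proof (G_lower_norm z _ _ Gd) as L.
    replace (vsub (vsub (q n) (q m)) (vscal z (vsub (p n) (p m)))) with (vsub (u n) (u m))
      in L by (rewrite (proj2 (Hq n)), (proj2 (Hq m)); vring).
    nra. }
  assert (Cq : converges_to q (vadd y (vscal z f))).
  { apply (conv_ext (fun n => vadd (u n) (vscal z (p n)))).
    - intro n. rewrite (proj2 (Hq n)). vring.
    - apply conv_add; [exact Cu|apply conv_scal, Cp]. }
  exists f, (vadd y (vscal z f)). split; [|vring].
  apply (G_closed p q); [intro n; apply Hq|exact Cp|exact Cq].
Qed.

Theorem G_surj (x : H) : exists f g, G f g /\ vsub g (vscal z f) = x.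
Proof.
  assert (R0 : G_range vzero) by (exists vzero, vzero; split; [apply G_zero|vring]).
  destruct (projection G_range R0 G_range_lin G_range_closed x) as [y [[f [g [Gfg ->]]] Ort]].
  set (w := vsub x (vsub g (vscal z f))) in *.
  assert (Gw : G w (vscal (Cconj z) w)).
  { apply G_max. intros f' k Gk.
    pose proof (Ort (vsub k (vscal z f')) (ex_intro _ f' (ex_intro _ k (conj Gk eq_refl)))) as O.
    unfold vsub in O. rewrite inner_addr, inner_oppr, inner_scalr in O.
    rewrite inner_scalr, (inner_conj w k), (inner_conj w f').
    pose proof (f_equal cre O); pose proof (f_equal cim O); simpl in *.
    apply Cx_eq; simpl; nra. }
  pose proof (G_lower (Cconj z) _ _ Gw) as L.
  replace (vsub (vscal (Cconj z) w) (vscal (Cconj z) w)) with (@vzero H) in L by vring.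
  rewrite nsq_vzero in L. pose proof (nsq_pos w).
  assert (0 < cim z * cim z) by (apply Rsqr_pos_lt; exact Hz).
  assert (W0 : w = vzero) by (apply nsq_zero; simpl in L; nra).
  assert (Ex : x = vadd (vsub g (vscal z f)) w) by (unfold w; vring).
  exists f, g. split; [exact Gfg|]. rewrite Ex, W0. vring.
Qed.

End NonReal.
End SelfAdjointGraph.

Section SelfAdjointOperator.
Context {H : HilbertSpace}.
Variable A : op H.
Hypothesis hA : self_adjoint A.

Lemma dom_lin a x y : dom A x -> dom A y ->
  dom A (vadd x (vscal a y)) /\ app A (vadd x (vscal a y)) = vadd (app A x) (vscal a (app A y)).
Proof.
  intros Dx Dy.
  assert (Gx : graph_of A x (app A x)) by (split; auto).
  assert (Gy : graph_of A y (app A y)) by (split; auto).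
  destruct (G_lin _ hA a _ _ _ _ Gx Gy) as [D E]. split; auto.
Qed.

Lemma dom_sub_scal c x y : dom A x -> dom A y ->
  dom A (vsub x (vscal c y)) /\ app A (vsub x (vscal c y)) = vsub (app A x) (vscal c (app A y)).
Proof.
  intros Dx Dy. destruct (dom_lin (Copp c) x y Dx Dy) as [D E].
  replace (vsub x (vscal c y)) with (vadd x (vscal (Copp c) y)) by vring.
  split; auto. rewrite E. vring.
Qed.

(* A - z is injective with ||R_z x|| <= ||x|| / |Im z|, and onto by G_surj. *)
Theorem sa_resolvent (z : Cx) : cim z <> 0 -> in_resolvent_set A z.
Proof.
  intro Hz.
  assert (Ex : forall x, exists f, dom A f /\ vsub (app A f) (vscal z f) = x).
  { intro x. destruct (G_surj _ hA z Hz x) as [f [g [[Df ->] E]]]. exists f; auto. }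
  set (R := fun x => proj1_sig (constructive_indefinite_description _ (Ex x))).
  assert (HR : forall x, dom A (R x) /\ vsub (app A (R x)) (vscal z (R x)) = x)
    by (intro x; exact (proj2_sig (constructive_indefinite_description _ (Ex x)))).
  assert (Pa : 0 < Rabs (cim z)) by (apply Rabs_pos_lt; exact Hz).
  exists R. split; [exact HR|split].
  - intros f Df. set (r := R (vsub (app A f) (vscal z f))).
    destruct (HR (vsub (app A f) (vscal z f))) as [DR ER]. fold r in DR, ER.
    destruct (dom_sub_scal Cone _ _ DR Df) as [Dd Ed].
    pose proof (G_lower_norm _ hA z _ _ (conj Dd eq_refl)) as L.
    replace (vsub (app A (vsub r (vscal Cone f))) (vscal z (vsub r (vscal Cone f))))
      with (vsub (vsub (app A r) (vscal z r)) (vsub (app A f) (vscal z f))) in L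
      by (rewrite Ed; vring).
    rewrite ER in L.
    replace (vsub (vsub (app A f) (vscal z f)) (vsub (app A f) (vscal z f))) with (@vzero H)
      in L by vring.
    unfold vnorm in L at 2. fold (nsq (@vzero H)) in L. rewrite nsq_vzero, sqrt_0 in L.
    pose proof (vnorm_pos (vsub r (vscal Cone f))).
    assert (Z : vnorm (vsub r (vscal Cone f)) = 0) by nra.
    apply vnorm_zero in Z. rewrite <- (vadd0 f), <- Z. vring.
  - exists (/ Rabs (cim z)). intro x. destruct (HR x) as [DR ER].
    pose proof (G_lower_norm _ hA z _ _ (conj DR eq_refl)) as L. rewrite ER in L.
    apply Rmult_le_reg_l with (r := Rabs (cim z)); [exact Pa|].
    replace (Rabs (cim z) * (/ Rabs (cim z) * vnorm x)) with (vnorm x) by (field; lra).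
    exact L.
Qed.

Section Resolvent.
Variables (z : Cx) (R : H -> H).
Hypothesis HR : is_resolvent A z R.

Lemma R_lin a x y : R (vadd x (vscal a y)) = vadd (R x) (vscal a (R y)).
Proof.
  destruct HR as [R1 [R2 _]]. destruct (R1 x) as [Dx Ex]. destruct (R1 y) as [Dy Ey].
  destruct (dom_lin a _ _ Dx Dy) as [D E].
  rewrite <- (R2 _ D). f_equal. rewrite E, <- Ex, <- Ey at 1. vring.
Qed.

Lemma R_scal a x : R (vscal a x) = vscal a (R x).
Proof.
  assert (R0 : R vzero = vzero).
  { replace (@vzero H) with (vadd (@vzero H) (vscal (Copp Cone) (@vzero H))) at 1 by vring.
    rewrite R_lin. vring. }
  replace (vscal a x) with (vadd vzero (vscal a x)) by vring. rewrite R_lin, R0. vring.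
Qed.

Lemma R_cont (u : nat -> H) l : converges_to u l -> converges_to (fun n => R (u n)) (R l).
Proof.
  intros Cu. destruct HR as [_ [_ [M HM]]].
  set (M' := Rmax M 0 + 1). assert (HM' : 0 < M') by (unfold M'; pose proof (Rmax_r M 0); lra).
  intros eps He. destruct (Cu (eps / M')) as [N HN]; [apply Rdiv_lt_0_compat; lra|].
  exists N. intros n Hn.
  replace (vsub (R (u n)) (R l)) with (R (vsub (u n) l))
    by (replace (vsub (u n) l) with (vadd (u n) (vscal (Copp Cone) l)) by vring;
        rewrite R_lin; vring).
  specialize (HM (vsub (u n) l)). specialize (HN n Hn). pose proof (vnorm_pos (vsub (u n) l)).
  pose proof (Rmax_l M 0).
  apply Rmult_lt_compat_l with (r := M') in HN; [|lra].
  replace (M' * (eps / M')) with eps in HN by (field; lra).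
  assert (M * vnorm (vsub (u n) l) <= M' * vnorm (vsub (u n) l))
    by (apply Rmult_le_compat_r; unfold M'; lra).
  lra.
Qed.

Lemma R_adj R' x y : is_resolvent A (Cconj z) R' -> inner (R x) y = inner x (R' y).
Proof.
  intros [Q1 _]. destruct HR as [P1 _]. destruct (P1 x) as [Dx Ex]. destruct (Q1 y) as [Dy Ey].
  rewrite <- Ex at 2. rewrite <- Ey at 1.
  assert (S : inner (app A (R x)) (R' y) = inner (R x) (app A (R' y)))
    by (apply (G_sym _ hA); split; auto).
  unfold vsub. rewrite inner_addr, inner_addl, inner_oppr, inner_oppl, inner_scalr,
    inner_scall, S.
  ceq.
Qed.

End Resolvent.
End SelfAdjointOperator.

(* For an essentially self-adjoint T and non-real z, the range of T - z is dense:
   it contains the range of (closure T) - z up to limits, which is everything. *)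
Lemma ess_sa_range_dense {H : HilbertSpace} (T : op H) (hT : ess_self_adjoint T)
  (z : Cx) (Hz : cim z <> 0) (x : H) : exists u : nat -> H,
  (forall n, dom T (u n)) /\ converges_to (fun n => vsub (app T (u n)) (vscal z (u n))) x.
Proof.
  destruct (G_surj _ hT z Hz x) as [f [g [[u [Du [Cu CTu]]] <-]]].
  exists u. split; [exact Du|].
  apply (conv_ext (fun n => vadd (app T (u n)) (vscal (Copp z) (u n)))); [intro n; vring|].
  eapply conv_eqlim; [apply conv_add; [exact CTu|apply conv_scal, Cu]|]. vring.
Qed.

Lemma sqrt_unit_facts (q s : Cx) : Cmod q = 1 -> Cmul q q <> Cone -> Cmul s s = q ->
  cre s * cre s + cim s * cim s = 1 /\ cim s <> 0.
Proof.
  intros hq hq2 hs. subst q. unfold Cmod in hq. simpl in hq.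
  set (X := (cre s * cre s - cim s * cim s) * (cre s * cre s - cim s * cim s) +
            (cre s * cim s + cim s * cre s) * (cre s * cim s + cim s * cre s)) in hq.
  assert (X0 : 0 <= X) by (unfold X; nra).
  assert (X1 : X = 1) by (rewrite <- (sqrt_sqrt X X0), hq; ring).
  unfold X in X1. assert (hs1 : cre s * cre s + cim s * cim s = 1) by nra.
  split; [exact hs1|]. intro E. apply hq2. rewrite E in hs1. apply Cx_eq; simpl; rewrite E; nra.
Qed.

Section Theorem7.
Context {H : HilbertSpace}.
Variables (A B : op H) (s : Cx) (a b : R).
Hypothesis hA : self_adjoint A.
Hypothesis hB : self_adjoint B.
Hypothesis ha : a <> 0.
Hypothesis hb : b <> 0.
Hypothesis hs1 : cre s * cre s + cim s * cim s = 1.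
Hypothesis hsi : cim s <> 0.

Local Notation q := (Cmul s s).
Local Notation lam := (Cmul (RtoC a) (Cconj s)).
Local Notation mu := (Cmul (RtoC b) (Cconj s)).
Local Notation c := (Cmul (Cmul (Cmul mu lam) q) (Csub q Cone)).
Local Notation z := (Cmul (Cmul (RtoC (/ 2)) (Csub (Cconj s) s)) (RtoC (a * b))).
Local Notation T := (T_op q s a b A B).

Lemma s_nonzero : s <> Czero.
Proof. intro E. rewrite E in hs1. simpl in hs1. lra. Qed.

Lemma s_conj_inv : Cconj s = Cinv s.
Proof. apply Cx_eq; unfold Cinv; simpl; rewrite hs1; field. Qed.

Lemma scaled_q r : Cmul (Cmul (RtoC r) (Cconj s)) q = Cmul (RtoC r) s.
Proof. rewrite s_conj_inv. field. exact s_nonzero. Qed.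

Lemma scaled_nonreal r : r <> 0 ->
  cim (Cmul (RtoC r) (Cconj s)) <> 0 /\ cim (Cmul (RtoC r) s) <> 0.
Proof.
  intro hr. simpl. split; intro E;
    (assert (Z : r * cim s = 0) by lra; apply Rmult_integral in Z as [|]; auto).
Qed.

Lemma z_nonreal : cim z <> 0.
Proof.
  simpl. intro E. assert (Z : cim s * (a * b) = 0) by lra.
  apply Rmult_integral in Z as [|Z]; auto. apply Rmult_integral in Z as [|]; auto.
Qed.

(* c = mu lam q (q - 1) = a b (q - 1), which vanishes only for q = 1. *)
Lemma c_nonzero : c <> Czero.
Proof.
  replace c with (Cmul (RtoC (a * b)) (Csub q Cone))
    by (rewrite RtoC_mult, s_conj_inv; field; exact s_nonzero).
  intro E. pose proof (f_equal cre E) as Er. pose proof (f_equal cim E) as Ei. simpl in Er, Ei.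
  assert (hab : a * b <> 0) by (intro Z; apply Rmult_integral in Z as [|]; auto).
  assert (Er' : a * b * (cre s * cre s - cim s * cim s - 1) = 0) by lra.
  assert (Ei' : a * b * (2 * cre s * cim s) = 0) by lra.
  apply Rmult_integral in Er' as [|Er']; [auto|]. apply Rmult_integral in Ei' as [|Ei']; [auto|].
  apply Rmult_integral in Ei' as [Ei'|]; [|auto]. assert (cre s = 0) by lra. nra.
Qed.

Definition shift_BA (f : H) : H :=
  vsub (app B (vsub (app A f) (vscal lam f))) (vscal mu (vsub (app A f) (vscal lam f))).
Definition shift_AB (f : H) : H :=
  vsub (app A (vsub (app B f) (vscal (Cmul mu q) f)))
       (vscal (Cmul lam q) (vsub (app B f) (vscal (Cmul mu q) f))).

Section OnDq.
Variable f : H.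
Hypothesis hf : Dq q A B f.

Lemma Dq_exchange : shift_AB f = vadd (vscal q (shift_BA f)) (vscal c f).
Proof.
  destruct hf as [DAf [DBAf [DBf [DABf Ecomm]]]]. unfold shift_AB, shift_BA.
  rewrite (proj2 (dom_sub_scal A hA _ _ _ DABf DAf)), (proj2 (dom_sub_scal B hB _ _ _ DBAf DBf)).
  rewrite Ecomm. vnormalize; rewrite ?s_conj_inv; field; exact s_nonzero.
Qed.

Lemma T_shift_BA : vscal (Cconj s) (vsub (app T f) (vscal (Copp z) f)) = shift_BA f.
Proof.
  destruct hf as [DAf [DBAf [DBf [DABf Ecomm]]]]. unfold shift_BA. cbn [T_op app].
  rewrite (proj2 (dom_sub_scal A hA _ _ _ DABf DAf)), (proj2 (dom_sub_scal B hB _ _ _ DBAf DBf)).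
  rewrite Ecomm. vnormalize;
    rewrite ?s_conj_inv, ?RtoC_half, ?RtoC_mult; field; auto using s_nonzero, two_nonzero.
Qed.

Lemma T_shift_AB : vscal s (vsub (app T f) (vscal z f)) = shift_AB f.
Proof.
  destruct hf as [DAf [DBAf [DBf [DABf Ecomm]]]]. unfold shift_AB. cbn [T_op app].
  rewrite !(proj2 (dom_sub_scal A hA _ _ _ DABf DAf)).
  rewrite Ecomm. vnormalize;
    rewrite ?s_conj_inv, ?RtoC_half, ?RtoC_mult; field; auto using s_nonzero, two_nonzero.
Qed.

Lemma shift_BA_inverted RA1 RB1 : is_resolvent A lam RA1 -> is_resolvent B mu RB1 ->
  RA1 (RB1 (shift_BA f)) = f.
Proof.
  intros [_ [HA1 _]] [_ [HB1 _]]. destruct hf as [DAf [DBAf [DBf _]]]. unfold shift_BA.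
  rewrite HB1 by exact (proj1 (dom_sub_scal B hB _ _ _ DBAf DBf)). exact (HA1 f DAf).
Qed.

Lemma shift_AB_inverted RAq RBq :
  is_resolvent A (Cmul lam q) RAq -> is_resolvent B (Cmul mu q) RBq ->
  RBq (RAq (shift_AB f)) = f.
Proof.
  intros [_ [HAq _]] [_ [HBq _]]. destruct hf as [DAf [_ [DBf [DABf _]]]]. unfold shift_AB.
  rewrite HAq by exact (proj1 (dom_sub_scal A hA _ _ _ DABf DAf)). exact (HBq f DBf).
Qed.

End OnDq.

Section Identities.
Hypothesis hT : ess_self_adjoint T.
Variables RA1 RAq RB1 RBq : H -> H.
Hypothesis HA1 : is_resolvent A lam RA1.
Hypothesis HAq : is_resolvent A (Cmul lam q) RAq.
Hypothesis HB1 : is_resolvent B mu RB1.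
Hypothesis HBq : is_resolvent B (Cmul mu q) RBq.

Lemma cont_R_lam_mu (v : nat -> H) y : converges_to v y ->
  converges_to (fun n => RA1 (RB1 (v n))) (RA1 (RB1 y)).
Proof. intro Cv. apply (R_cont A hA _ _ HA1), (R_cont B hB _ _ HB1), Cv. Qed.

Lemma cont_R_mu_lam_q (v : nat -> H) y : converges_to v y ->
  converges_to (fun n => RBq (RAq (v n))) (RBq (RAq y)).
Proof. intro Cv. apply (R_cont B hB _ _ HBq), (R_cont A hA _ _ HAq), Cv. Qed.

(* R_lam(A) R_mu(B) = q R_{mu q}(B) R_{lam q}(A) + c R_{mu q}(B) R_{lam q}(A) R_lam(A) R_mu(B):
   checked on the dense set of vectors shift_BA f, f in D_q(A,B). *)
Lemma first_identity x : RA1 (RB1 x) =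
  vadd (vscal q (RBq (RAq x))) (vscal c (RBq (RAq (RA1 (RB1 x))))).
Proof.
  assert (Hz : cim (Copp z) <> 0) by (pose proof z_nonreal; simpl in *; lra).
  destruct (ess_sa_range_dense T hT (Copp z) Hz (vscal s x)) as [u [Du Cu]].
  assert (Cg : converges_to (fun n => shift_BA (u n)) x).
  { apply (conv_ext (fun n => vscal (Cconj s) (vsub (app T (u n)) (vscal (Copp z) (u n)))));
      [intro n; apply T_shift_BA, Du|].
    eapply conv_eqlim; [apply conv_scal, Cu|].
    rewrite vscalA, s_conj_inv. replace (Cmul (Cinv s) s) with Cone
      by (field; exact s_nonzero). apply vscal1. }
  apply (eq_by_approximation (fun y => RA1 (RB1 y))
    (fun y => vadd (vscal q (RBq (RAq y))) (vscal c (RBq (RAq (RA1 (RB1 y))))))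
    (fun n => shift_BA (u n)) x).
  - apply cont_R_lam_mu, Cg.
  - apply conv_add; apply conv_scal; [apply cont_R_mu_lam_q, Cg|].
    apply cont_R_mu_lam_q, cont_R_lam_mu, Cg.
  - intro n. pose proof (shift_AB_inverted _ (Du n) _ _ HAq HBq) as E.
    rewrite Dq_exchange, (R_lin A hA _ _ HAq), !(R_scal A hA _ _ HAq),
      (R_lin B hB _ _ HBq), !(R_scal B hB _ _ HBq) in E by exact (Du n).
    rewrite (shift_BA_inverted _ (Du n) _ _ HA1 HB1). symmetry; exact E.
Qed.

(* The same identity with the last product in the opposite order, checked on the
   dense set of vectors shift_AB f, f in D_q(A,B). *)
Lemma second_identity x : RA1 (RB1 x) =
  vadd (vscal q (RBq (RAq x))) (vscal c (RA1 (RB1 (RBq (RAq x))))).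
Proof.
  destruct (ess_sa_range_dense T hT z z_nonreal (vscal (Cconj s) x)) as [u [Du Cu]].
  assert (Ch : converges_to (fun n => shift_AB (u n)) x).
  { apply (conv_ext (fun n => vscal s (vsub (app T (u n)) (vscal z (u n)))));
      [intro n; apply T_shift_AB, Du|].
    eapply conv_eqlim; [apply conv_scal, Cu|].
    rewrite vscalA, s_conj_inv. replace (Cmul s (Cinv s)) with Cone
      by (field; exact s_nonzero). apply vscal1. }
  apply (eq_by_approximation (fun y => RA1 (RB1 y))
    (fun y => vadd (vscal q (RBq (RAq y))) (vscal c (RA1 (RB1 (RBq (RAq y))))))
    (fun n => shift_AB (u n)) x).
  - apply cont_R_lam_mu, Ch.
  - apply conv_add; apply conv_scal; [apply cont_R_mu_lam_q, Ch|].
    apply cont_R_lam_mu, cont_R_mu_lam_q, Ch.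
  - intro n. rewrite (Dq_exchange _ (Du n)) at 1.
    rewrite (R_lin B hB _ _ HB1), !(R_scal B hB _ _ HB1), (R_lin A hA _ _ HA1),
      !(R_scal A hA _ _ HA1), (shift_BA_inverted _ (Du n) _ _ HA1 HB1).
    rewrite (shift_AB_inverted _ (Du n) _ _ HAq HBq). reflexivity.
Qed.

End Identities.

(* N = R_{bs}(B) R_{as}(A) has adjoint R_lam(A) R_mu(B) (as conj (a s) = lam), and the
   two identities together say that these commute. *)
Theorem product_normal (hT : ess_self_adjoint T) RAs RBs :
  is_resolvent A (Cmul (RtoC a) s) RAs -> is_resolvent B (Cmul (RtoC b) s) RBs ->
  normal_bdd (fun x => RBs (RAs x)).
Proof.
  intros HAs HBs.
  destruct (sa_resolvent A hA lam (proj1 (scaled_nonreal a ha))) as [RA1 HA1].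
  destruct (sa_resolvent B hB mu (proj1 (scaled_nonreal b hb))) as [RB1 HB1].
  assert (HAq : is_resolvent A (Cmul lam q) RAs) by (rewrite scaled_q; exact HAs).
  assert (HBq : is_resolvent B (Cmul mu q) RBs) by (rewrite scaled_q; exact HBs).
  split; [apply bounded_comp; [apply HAs|apply HBs]|].
  exists (fun x => RA1 (RB1 x)). split.
  - intros x y. replace mu with (Cconj (Cmul (RtoC b) s)) in HB1 by ceq.
    replace lam with (Cconj (Cmul (RtoC a) s)) in HA1 by ceq.
    rewrite (R_adj B hB _ _ HBs _ _ _ HB1). exact (R_adj A hA _ _ HAs _ _ _ HA1).
  - intro x. apply (vadd_scal_cancel c (vscal q (RBs (RAs x)))); [exact c_nonzero|].
    rewrite <- (first_identity hT _ _ _ _ HA1 HAq HB1 HBq),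
      <- (second_identity hT _ _ _ _ HA1 HAq HB1 HBq). reflexivity.
Qed.

End Theorem7.

Theorem mainTheorem7 (H : HilbertSpace) (q s : Cx) (a b : R) (A B : op H)
  (hq : Cmod q = 1) (hq2 : Cmul q q <> Cone)
  (hA : self_adjoint A) (hB : self_adjoint B)
  (hab : a * b <> 0) (hs : Cmul s s = q)
  (hT : ess_self_adjoint (T_op q s a b A B)) :
  let lam := Cmul (RtoC a) (Cconj s) in
  let mu := Cmul (RtoC b) (Cconj s) in
  in_resolvent_set A lam /\ in_resolvent_set A (Cmul lam q) /\
  in_resolvent_set B mu /\ in_resolvent_set B (Cmul mu q) /\
  in_resolvent_set A (Cmul (RtoC a) s) /\ in_resolvent_set B (Cmul (RtoC b) s) /\
  (forall RA1 RAq RB1 RBq : H -> H,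
     is_resolvent A lam RA1 -> is_resolvent A (Cmul lam q) RAq ->
     is_resolvent B mu RB1 -> is_resolvent B (Cmul mu q) RBq ->
     let c := Cmul (Cmul (Cmul mu lam) q) (Csub q Cone) in
     (forall x, RA1 (RB1 x) =
        vadd (vscal q (RBq (RAq x))) (vscal c (RBq (RAq (RA1 (RB1 x)))))) /\
     (forall x, RA1 (RB1 x) =
        vadd (vscal q (RBq (RAq x))) (vscal c (RA1 (RB1 (RBq (RAq x))))))) /\
  (forall RAs RBs : H -> H,
     is_resolvent A (Cmul (RtoC a) s) RAs -> is_resolvent B (Cmul (RtoC b) s) RBs ->
     normal_bdd (fun x => RBs (RAs x))).
Proof.
  intros lam mu. subst lam mu.
  destruct (sqrt_unit_facts q s hq hq2 hs) as [hs1 hsi]. subst q.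
  assert (ha : a <> 0) by (intro E; apply hab; rewrite E; ring).
  assert (hb : b <> 0) by (intro E; apply hab; rewrite E; ring).
  destruct (scaled_nonreal s hsi a ha) as [Ia Ias].
  destruct (scaled_nonreal s hsi b hb) as [Ib Ibs].
  split; [exact (sa_resolvent A hA _ Ia)|].
  split; [rewrite (scaled_q s hs1); exact (sa_resolvent A hA _ Ias)|].
  split; [exact (sa_resolvent B hB _ Ib)|].
  split; [rewrite (scaled_q s hs1); exact (sa_resolvent B hB _ Ibs)|].
  split; [exact (sa_resolvent A hA _ Ias)|].
  split; [exact (sa_resolvent B hB _ Ibs)|].
  split; [intros RA1 RAq RB1 RBq HA1 HAq HB1 HBq c; split|].
  - exact (first_identity A B s a b hA hB ha hb hs1 hsi hT _ _ _ _ HA1 HAq HB1 HBq).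
  - exact (second_identity A B s a b hA hB ha hb hs1 hsi hT _ _ _ _ HA1 HAq HB1 HBq).
  - exact (product_normal A B s a b hA hB ha hb hs1 hsi hT).
Qed.
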